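(* Under the setting below, let $(x^*,z^*,s^* )$ with multiplier $\lambda^*$ for (C) (and nonnegative multipliers for the other constraints) be a KKT point of (P). Then for every $t$ with $(\beta_t,\theta_t)\in\Omega^{III}_t(\lambda^* )$ we have $(x_t^*,z_t^* )=(x^{III}_t(\lambda^* ),z^{III}_t(\lambda^* ))$, where $x^{III}_t(\lambda)=u_t'^{-1}\big(X_t(\lambda)/\theta_t\big)$, $z^{III}_t(\lambda)=x^{III}_t(\lambda)-a_t(\beta_t,\lambda)$, and $\Omega^{III}_t(\lambda)=\Big\{(\beta,\theta):\beta>0,\ \frac{X_t(\lambda)}{u_t'(a_t(\beta,\lambda))}\le\theta\le\frac{X_t(\lambda)}{u_t'(1)}\Big\}$.
   Context: Fix an integer $T\ge 1$, a data cap $Q>0$ and an overage fee $\pi>0$. For each $t\in\{1,\dots,T\}$ fix reals $d_t\ge 0$, $r_t\ge 0$, $c_t>0$, $p_t>0$, $\theta_t>0$, $\beta_t>0$ and functions $u_t,e_t:[0,\infty)\to\mathbb{R}$ such that: $u_t$ is continuous, increasing and strictly concave, differentiable on $(0,\infty)$, and $u_t':(0,\infty)\to(0,\infty)$ is a strictly decreasing bijection with inverse $u_t'^{-1}$; $e_t$ is increasing, strictly convex and continuously differentiable, and $e_t':[0,\infty)\to[0,\infty)$ is a strictly increasing bijection with inverse $e_t'^{-1}$. For $0\le z\le x\le 1$ let $\tilde f_t(x,z)=\theta_t u_t(x)-\beta_t e_t((x-z)c_t)-p_t c_t z$ and $\tilde h_t(x,z)=d_t x+r_t z$. Problem (P):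 maximize $\sum_{t=1}^T \tilde f_t(x_t,z_t)-\pi s$ over $x,z\in\mathbb{R}^T$, $s\in\mathbb{R}$, subject to $0\le z_t\le x_t\le 1$ for all $t$, $s\ge 0$, and (C): $s\ge \sum_{t=1}^T\tilde h_t(x_t,z_t)-Q$. A KKT point of (P) consists of a feasible $(x^*,z^*,s^* )$ and nonnegative Lagrange multipliers for all constraints satisfying stationarity of the Lagrangian and complementary slackness; $\lambda^*$ denotes the multiplier of (C) (the shadow price of wireless data). For $\lambda\ge 0$ and $\beta>0$ write $a_t(\beta,\lambda)=\frac{1}{c_t}\,e_t'^{-1}\!\Big(\frac{p_tc_t+r_t\lambda}{\beta c_t}\Big)$ and $X_t(\lambda)=p_tc_t+(d_t+r_t)\lambda$. *)

From Stdlib Require Import Reals.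
From Coquelicot Require Import Coquelicot.
Open Scope R_scope.

(* Sum over t = 0 .. n-1 (periods 1..T are indexed 0..T-1). *)
Fixpoint sumT (f : nat -> R) (n : nat) : R :=
  match n with
  | O => 0
  | S k => sumT f k + f k
  end.

(* Standing assumptions on u_t : [0,oo) -> R with derivative up = u_t'
   on (0,oo) and upinv = (u_t')^{-1}. Values of u outside [0,oo) are irrelevant. *)
Definition u_regular (u up upinv : R -> R) : Prop :=
  (* continuous on [0,oo): at 0 from the right, elsewhere by differentiability *)
  filterlim u (at_right 0) (locally (u 0)) /\
  (forall x y, 0 <= x -> x <= y -> u x <= u y) /\
  (forall x y l, 0 <= x -> 0 <= y -> x <> y -> 0 < l < 1 ->
      l * u x + (1 - l) * u y < u (l * x + (1 - l) * y)) /\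
  (forall x, 0 < x -> derivable_pt_lim u x (up x)) /\
  (forall x, 0 < x -> 0 < up x) /\
  (forall x y, 0 < x -> x < y -> up y < up x) /\
  (forall y, 0 < y -> 0 < upinv y /\ up (upinv y) = y) /\
  (forall x, 0 < x -> upinv (up x) = x).

Definition deriv_nonneg (f : R -> R) (y l : R) : Prop :=
  filterlim (fun h => (f (y + h) - f y) / h)
    (within (fun h => h <> 0 /\ 0 <= y + h) (locally 0)) (locally l).

Definition e_regular (e ep epinv : R -> R) : Prop :=
  (forall x y, 0 <= x -> x <= y -> e x <= e y) /\
  (forall x y l, 0 <= x -> 0 <= y -> x <> y -> 0 < l < 1 ->
      e (l * x + (1 - l) * y) < l * e x + (1 - l) * e y) /\
  (forall y, 0 <= y -> deriv_nonneg e y (ep y)) /\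
  (forall y, 0 <= y ->
      filterlim ep (within (fun w => 0 <= w) (locally y)) (locally (ep y))) /\
  (forall x, 0 <= x -> 0 <= ep x) /\
  (forall x y, 0 <= x -> x < y -> ep x < ep y) /\
  (forall y, 0 <= y -> 0 <= epinv y /\ ep (epinv y) = y) /\
  (forall x, 0 <= x -> epinv (ep x) = x).

(* KKT point of problem (P) with multiplier lam for constraint (C).
   Multipliers: muz t for z_t >= 0, muxz t for x_t - z_t >= 0,
   nu t for 1 - x_t >= 0, sig for s >= 0.
   Stationarity is written as the vanishing of the partial derivatives of
   the Lagrangian
     sum_t f_t(x_t,z_t) - pi s + sum_t muz_t z_t + sum_t muxz_t (x_t - z_t)
       + sum_t nu_t (1 - x_t) + sig s + lam (s - sum_t h_t(x_t,z_t) + Q).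
   Since u_t' blows up at 0 (u_t' is onto (0,oo)), the Lagrangian is
   differentiable in x_t only when x_t > 0; this is part of stationarity. *)
Definition KKT_point (T : nat) (Q pi : R)
    (d r c p theta beta : nat -> R) (up ep : nat -> R -> R)
    (u e : nat -> R -> R)
    (x z : nat -> R) (s lam : R) : Prop :=
  (forall t, (t < T)%nat -> 0 <= z t /\ z t <= x t /\ x t <= 1) /\
  0 <= s /\
  s >= sumT (fun t => d t * x t + r t * z t) T - Q /\
  0 <= lam /\
  exists (muz muxz nu : nat -> R) (sig : R),
    0 <= sig /\
    (forall t, (t < T)%nat ->
       0 <= muz t /\ 0 <= muxz t /\ 0 <= nu t /\
       0 < x t /\
       theta t * up t (x t) - beta t * c t * ep t ((x t - z t) * c t)
         - lam * d t + muxz t - nu t = 0 /\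
       beta t * c t * ep t ((x t - z t) * c t) - p t * c t
         - lam * r t + muz t - muxz t = 0 /\
       muz t * z t = 0 /\ muxz t * (x t - z t) = 0 /\ nu t * (1 - x t) = 0) /\
    - pi + sig + lam = 0 /\
    sig * s = 0 /\
    lam * (s - sumT (fun t => d t * x t + r t * z t) T + Q) = 0.

Definition a_fun (c p r : R) (epinv : R -> R) (beta lam : R) : R :=
  / c * epinv ((p * c + r * lam) / (beta * c)).

Definition X_fun (c p d r : R) (lam : R) : R := p * c + (d + r) * lam.

Definition Omega3 (c p d r : R) (up epinv : R -> R) (lam beta theta : R) : Prop :=
  0 < beta /\
  X_fun c p d r lam / up (a_fun c p r epinv beta lam) <= theta /\
  theta <= X_fun c p d r lam / up 1.

Definition x3 (c p d r theta : R) (upinv : R -> R) (lam : R) : R :=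
  upinv (X_fun c p d r lam / theta).

Definition z3 (c p d r theta beta : R) (upinv epinv : R -> R) (lam : R) : R :=
  x3 c p d r theta upinv lam - a_fun c p r epinv beta lam.

From Stdlib Require Import Reals Lra Psatz.
From Coquelicot Require Import Coquelicot.
Open Scope R_scope.

(* Fix a period t and let K = (p c + r lam) / (beta c) > 0,
   w = e'^{-1}(K) (so beta c e'(w) = p c + r lam) and a = w / c = a_t(beta, lam).
   Adding the two stationarity equations gives
     theta u'(x) = X - mu_z + nu,                        X = X_t(lam).
   The Omega^III bounds say theta u'(1) <= X <= theta u'(a), hence a <= 1.
   - If mu_z > 0 then z = 0, mu_xz = 0 and beta c e'(x c) < beta c e'(w),
     so x < a <= 1; then nu = 0 and theta u'(x) < X <= theta u'(a), contradicting
     the monotonicity of u'.  So mu_z = 0.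
   - If nu > 0 then x = 1 and theta u'(1) = X + nu > X, contradiction.
   - If mu_xz > 0 then x = z, and e'(0) = 0 turns the z-equation into
     0 = p c + r lam + mu_xz > 0, contradiction.
   With all three multipliers zero, theta u'(x) = X and e'((x - z) c) = K;
   inverting u' and e' yields x = x^III and x - z = a, i.e. z = z^III. *)

Lemma strict_incr_reflect (f : R -> R) (a b : R) :
  (forall x y, 0 <= x -> x < y -> f x < f y) ->
  0 <= a -> 0 <= b -> f a < f b -> a < b.
Proof.
  intros f_incr a_ge0 b_ge0 fab.
  destruct (Rlt_or_le a b) as [ab | ba]; [exact ab |].
  destruct (Rle_lt_or_eq_dec b a ba) as [ba' | ->].
  - pose proof (f_incr b a b_ge0 ba'). lra.
  - lra.
Qed.

(* A strictly increasing map of [0,oo) onto [0,oo) sends 0 to 0; this is why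
   e_t'(0) = 0, which rules out a binding constraint z_t <= x_t. *)
Lemma incr_onto_fixes_zero (f : R -> R) :
  (forall x y, 0 <= x -> x < y -> f x < f y) ->
  0 <= f 0 -> (exists w, 0 <= w /\ f w = 0) -> f 0 = 0.
Proof.
  intros f_incr f0_ge0 [w [w_ge0 fw]].
  destruct (Rle_lt_or_eq_dec 0 w w_ge0) as [w_pos | <-]; [| exact fw].
  pose proof (f_incr 0 w (Rle_refl 0) w_pos). lra.
Qed.

Lemma slack_binding (mu g : R) : 0 < mu -> mu * g = 0 -> g = 0.
Proof.
  intros mu_pos slack.
  destruct (Rmult_integral _ _ slack) as [mu0 | g0]; [lra | exact g0].
Qed.

Lemma slack_inactive (mu g : R) : 0 < g -> mu * g = 0 -> mu = 0.
Proof.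
  intros g_pos slack.
  destruct (Rmult_integral _ _ slack) as [mu0 | g0]; [exact mu0 | lra].
Qed.

Lemma e_regular_zero (e ep epinv : R -> R) : e_regular e ep epinv -> ep 0 = 0.
Proof.
  intros (_ & _ & _ & _ & ep_ge0 & ep_incr & ep_epinv & _).
  apply incr_onto_fixes_zero; [exact ep_incr | exact (ep_ge0 0 (Rle_refl 0)) |].
  exists (epinv 0). exact (ep_epinv 0 (Rle_refl 0)).
Qed.

Lemma e_regular_level (e ep epinv : R -> R) (K : R) :
  e_regular e ep epinv -> 0 < K -> 0 < epinv K /\ ep (epinv K) = K.
Proof.
  intros He K_pos.
  pose proof (e_regular_zero e ep epinv He) as ep_at_0.
  destruct He as (_ & _ & _ & _ & _ & _ & ep_epinv & _).
  destruct (ep_epinv K (Rlt_le _ _ K_pos)) as [w_ge0 ep_w].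
  split; [| exact ep_w].
  destruct (Rle_lt_or_eq_dec _ _ w_ge0) as [w_pos | w0]; [exact w_pos |].
  rewrite <- w0, ep_at_0 in ep_w. lra.
Qed.

Lemma invert_marginal_utility (u up upinv : R -> R) (theta x X : R) :
  u_regular u up upinv -> 0 < theta -> 0 < x ->
  theta * up x = X -> x = upinv (X / theta).
Proof.
  intros (_ & _ & _ & _ & _ & _ & _ & upinv_up) theta_pos x_pos foc.
  rewrite <- (upinv_up x x_pos), <- foc. f_equal. field. lra.
Qed.

Lemma invert_marginal_cost (e ep epinv : R -> R) (bc y Y : R) :
  e_regular e ep epinv -> 0 < bc -> 0 <= y ->
  bc * ep y = Y -> y = epinv (Y / bc).
Proof.
  intros (_ & _ & _ & _ & _ & _ & _ & epinv_ep) bc_pos y_ge0 foc.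
  rewrite <- (epinv_ep y y_ge0), <- foc. f_equal. field. lra.
Qed.

Lemma Omega3_marginal_bounds (c p d r : R) (up epinv : R -> R) (lam beta theta : R) :
  (forall y, 0 < y -> 0 < up y) -> 0 < a_fun c p r epinv beta lam ->
  Omega3 c p d r up epinv lam beta theta ->
  X_fun c p d r lam <= theta * up (a_fun c p r epinv beta lam) /\
  theta * up 1 <= X_fun c p d r lam.
Proof.
  intros up_pos a_pos [_ [lo hi]].
  split.
  - apply Rle_div_l; [exact (up_pos _ a_pos) | exact lo].
  - apply Rle_div_r; [exact (up_pos 1 Rlt_0_1) | exact hi].
Qed.

Section SinglePeriodKKT.

Variables up ep : R -> R.
Hypothesis up_decr : forall x y, 0 < x -> x < y -> up y < up x.
Hypothesis ep_incr : forall x y, 0 <= x -> x < y -> ep x < ep y.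
Hypothesis ep_at_0 : ep 0 = 0.

(* Y = p c + r lam is the marginal price of z, D = lam d the extra price of x,
   and w >= 0 the critical deficit with beta c e'(w) = Y. *)
Variables theta beta c Y D w : R.
Hypothesis theta_pos : 0 < theta.
Hypothesis beta_pos : 0 < beta.
Hypothesis c_pos : 0 < c.
Hypothesis Y_pos : 0 < Y.
Hypothesis w_ge0 : 0 <= w.
Hypothesis w_crit : beta * c * ep w = Y.

(* a = w / c, the deficit x - z at which the z-equation balances. *)
Let a := / c * w.

Hypothesis Omega_lo : Y + D <= theta * up a.
Hypothesis Omega_hi : theta * up 1 <= Y + D.

Variables x z muz muxz nu : R.
Hypothesis x_pos : 0 < x.
Hypothesis muz_ge0 : 0 <= muz.
Hypothesis muxz_ge0 : 0 <= muxz.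
Hypothesis nu_ge0 : 0 <= nu.
Hypothesis stat_x :
  theta * up x - beta * c * ep ((x - z) * c) - D + muxz - nu = 0.
Hypothesis stat_z : beta * c * ep ((x - z) * c) - Y + muz - muxz = 0.
Hypothesis slack_z : muz * z = 0.
Hypothesis slack_xz : muxz * (x - z) = 0.
Hypothesis slack_x : nu * (1 - x) = 0.

Lemma total_stationarity : theta * up x = Y + D - muz + nu.
Proof. lra. Qed.

Lemma crit_deficit_le_one : a <= 1.
Proof.
  destruct (Rle_or_lt a 1) as [a_le | one_lt]; [exact a_le |].
  pose proof (up_decr 1 a Rlt_0_1 one_lt). nra.
Qed.

(* A binding constraint z >= 0 forces x below the critical deficit:
   with z = 0 the z-equation reads beta c e'(x c) = Y - mu_z < beta c e'(w). *)
Lemma binding_z_short : 0 < muz -> x < a.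
Proof.
  intros muz_pos.
  assert (z0 : z = 0) by exact (slack_binding _ _ muz_pos slack_z).
  assert (muxz0 : muxz = 0) by (apply (slack_inactive _ (x - z)); lra).
  assert (below : ep (x * c) < ep w).
  { pose proof stat_z as z_eq.
    rewrite z0, Rminus_0_r in z_eq.
    apply (Rmult_lt_reg_l (beta * c)); [nra | lra]. }
  apply strict_incr_reflect in below; [| exact ep_incr | nra | exact w_ge0].
  unfold a. apply (Rmult_lt_reg_l c); [exact c_pos |].
  field_simplify; lra.
Qed.

(* The constraint z >= 0 is slack: otherwise x < a <= 1, so nu = 0 and
   theta u'(x) = X - mu_z < X <= theta u'(a) < theta u'(x). *)
Lemma muz_zero : muz = 0.
Proof.
  destruct (Rle_lt_or_eq_dec 0 muz muz_ge0) as [muz_pos | <-]; [exfalso | reflexivity].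
  pose proof (binding_z_short muz_pos) as x_lt_a.
  pose proof crit_deficit_le_one.
  assert (nu0 : nu = 0) by (apply (slack_inactive _ (1 - x)); lra).
  pose proof (up_decr x a x_pos x_lt_a).
  pose proof total_stationarity. nra.
Qed.

(* The constraint x <= 1 is slack: otherwise theta u'(1) = X + nu > X. *)
Lemma nu_zero : nu = 0.
Proof.
  destruct (Rle_lt_or_eq_dec 0 nu nu_ge0) as [nu_pos | <-]; [exfalso | reflexivity].
  assert (x1 : 1 - x = 0) by exact (slack_binding _ _ nu_pos slack_x).
  pose proof total_stationarity as total.
  replace x with 1 in total by lra.
  pose proof muz_zero. lra.
Qed.

(* Since e'(0) = 0, a binding constraint z <= x would make the z-equation
   read 0 = Y + mu_xz > 0. *)
Lemma muxz_zero : muxz = 0.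
Proof.
  destruct (Rle_lt_or_eq_dec 0 muxz muxz_ge0) as [muxz_pos | <-]; [exfalso | reflexivity].
  assert (xz0 : x - z = 0) by exact (slack_binding _ _ muxz_pos slack_xz).
  pose proof stat_z as z_eq.
  rewrite xz0, Rmult_0_l, ep_at_0 in z_eq.
  pose proof muz_zero. lra.
Qed.

Lemma interior_first_order :
  theta * up x = Y + D /\ beta * c * ep ((x - z) * c) = Y.
Proof.
  pose proof muz_zero. pose proof nu_zero. pose proof muxz_zero.
  split; [pose proof total_stationarity |]; lra.
Qed.

End SinglePeriodKKT.

Theorem lemma3 (T : nat) (Q pi : R)
    (d r c p theta beta : nat -> R)
    (u e up upinv ep epinv : nat -> R -> R)
    (x z : nat -> R) (s lam : R) :
  (1 <= T)%nat ->
  0 < Q -> 0 < pi ->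
  (forall t, (t < T)%nat ->
     0 <= d t /\ 0 <= r t /\ 0 < c t /\ 0 < p t /\ 0 < theta t /\ 0 < beta t /\
     u_regular (u t) (up t) (upinv t) /\
     e_regular (e t) (ep t) (epinv t)) ->
  KKT_point T Q pi d r c p theta beta up ep u e x z s lam ->
  forall t, (t < T)%nat ->
    Omega3 (c t) (p t) (d t) (r t) (up t) (epinv t) lam (beta t) (theta t) ->
    x t = x3 (c t) (p t) (d t) (r t) (theta t) (upinv t) lam /\
    z t = z3 (c t) (p t) (d t) (r t) (theta t) (beta t) (upinv t) (epinv t) lam.
Proof.
  intros _ _ _ Hpar HK t Ht HOmega.
  destruct (Hpar t Ht) as (_ & Hr & Hc & Hp & Hth & Hb & Hu & He).
  destruct HK as (Hfeas & _ & _ & Hlam & muz & muxz & nu & _ & _ & Hst & _).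
  destruct (Hfeas t Ht) as (_ & z_le_x & _).
  destruct (Hst t Ht) as (Hmz & Hmxz & Hnu & Hx0 & stat_x & stat_z & sl_z & sl_xz & sl_x).
  pose proof Hu as (_ & _ & _ & _ & up_pos & up_decr & _).
  pose proof He as (_ & _ & _ & _ & _ & ep_incr & _).
  (* Y is the marginal price of z and w = epinv (Y / (beta c)) the critical
     deficit, so that a_t(beta, lam) = w / c. *)
  set (Y := p t * c t + r t * lam).
  assert (K_pos : 0 < Y / (beta t * c t)) by (apply Rdiv_lt_0_compat; unfold Y; nra).
  destruct (e_regular_level _ _ _ _ He K_pos) as [w_pos ep_w].
  assert (w_crit : beta t * c t * ep t (epinv t (Y / (beta t * c t))) = Y)
    by (rewrite ep_w; field; lra).
  destruct (Omega3_marginal_bounds _ _ _ _ _ _ _ _ _ up_pos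
              (Rmult_lt_0_compat _ _ (Rinv_0_lt_compat _ Hc) w_pos) HOmega)
    as [Omega_lo Omega_hi].
  assert (X_split : X_fun (c t) (p t) (d t) (r t) lam = Y + lam * d t)
    by (unfold X_fun, Y; ring).
  rewrite X_split in Omega_lo, Omega_hi.
  destruct (interior_first_order (up t) (ep t) up_decr ep_incr (e_regular_zero _ _ _ He)
              (theta t) (beta t) (c t) Y (lam * d t) _ Hth Hb Hc ltac:(unfold Y; nra)
              (Rlt_le _ _ w_pos) w_crit Omega_lo Omega_hi
              (x t) (z t) (muz t) (muxz t) (nu t)
              Hx0 Hmz Hmxz Hnu stat_x ltac:(unfold Y; lra) sl_z sl_xz sl_x)
    as [foc_x foc_z].
  rewrite <- X_split in foc_x.
  assert (x_eq := invert_marginal_utility _ _ _ _ _ _ Hu Hth Hx0 foc_x).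
  assert (deficit : (x t - z t) * c t = epinv t (Y / (beta t * c t)))
    by (apply (invert_marginal_cost (e t) (ep t)); [exact He | nra | nra | exact foc_z]).
  split; [exact x_eq |].
  unfold z3, x3, a_fun. fold Y. rewrite <- x_eq, <- deficit. field. lra.
Qed.
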